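(* Let $p,q,r$ be pairwise distinct primes with $p<q$ and $p<r$, and let $n$ be an integer with $0\le n<pqr$. For a finite sequence $(t_1,\dots,t_l)$ and $d\in\{0,1,2\}$ let $N_d(t_1,\dots,t_l)$ be the number of indices $i$ with $t_i=d$. Then $$a_{pqr}(n)=\sum_{k=n-p+1}^{n}\big(N_0(F_k,F_{k-q-r})-N_0(F_{k-q},F_{k-r})\big)=\sum_{k=n-p+1}^{n}\big(N_2(F_k,F_{k-q-r})-N_2(F_{k-q},F_{k-r})\big)$$ $$=\frac12\sum_{k=n-p+1}^{n}\big(N_1(F_{k-q},F_{k-r})-N_1(F_k,F_{k-q-r})\big).$$
   Context: $\Phi_{pqr}(x)=\prod_{0<k<pqr,\ \gcd(k,pqr)=1}(x-\zeta^k)$, $\zeta$ a primitive $pqr$-th root of unity, with coefficients $a_{pqr}(n)$ (zero outside $[0,\deg\Phi_{pqr}]$). For each integer $k$, let $a_k,b_k,c_k$ be the unique integers with $0\le a_k<p$, $0\le b_k<q$, $0\le c_k<r$ and $k\equiv a_kqr+b_krp+c_kpq \pmod{pqr}$, and define $F_k=\frac{a_k}{p}+\frac{b_k}{q}+\frac{c_k}{r}-\frac{k}{pqr}$. *)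

From HB Require Import structures.
From mathcomp Require Import all_boot all_order all_algebra all_field.
Set Implicit Arguments. Unset Strict Implicit. Unset Printing Implicit Defensive.
Import Order.TTheory GRing.Theory Num.Theory.
Local Open Scope ring_scope.

Definition acoef (m n : nat) : int := ('Phi_m)`_n.

(* (a_k, b_k, c_k): the (unique, for pairwise distinct primes) triple with
   0 <= a_k < p, 0 <= b_k < q, 0 <= c_k < r and
   k = a_k qr + b_k rp + c_k pq  (mod pqr). *)
Definition abc (p q r : nat) (k : int) : nat * nat * nat :=
  match [pick t : 'I_p * 'I_q * 'I_r |
          (k == ((t.1.1 * (q * r) + t.1.2 * (r * p) + t.2 * (p * q))%N)%:Z
              %[mod ((p * q * r)%N)%:Z])%Z] with
  | Some t => (nat_of_ord t.1.1, nat_of_ord t.1.2, nat_of_ord t.2)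
  | None => (0%N, 0%N, 0%N)
  end.

Definition Fk (p q r : nat) (k : int) : rat :=
  let t := abc p q r k in
  (t.1.1)%:R / p%:R + (t.1.2)%:R / q%:R + (t.2)%:R / r%:R
  - k%:~R / ((p * q * r)%N)%:R.

Definition Ncount (d : nat) (s : seq rat) : nat := count (fun x => x == d%:R) s.

From HB Require Import structures.
From mathcomp Require Import all_boot all_order all_algebra all_field.
From mathcomp Require Import ring zify.
Import Order.TTheory GRing.Theory Num.Theory.
Local Open Scope ring_scope.

(* Write m = pqr and let E be the lattice polynomial, the sum
   of X^(a qr + b rp + c pq) over the digit triples 0 <= a < p, 0 <= b < q,
   0 <= c < r.

   Step 1 (cyclotomic identity).  Factoring X^d - 1 over the Phi_e, e | d, gives
     Phi_m (X-1)(X^pq-1)(X^qr-1)(X^pr-1) = (X^m-1)(X^p-1)(X^q-1)(X^r-1),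
   and E is a product of three geometric sums; hence
     (1 + X + ... + X^(p-1)) (X^q-1)(X^r-1) E = Phi_m (X^m-1)^2,
   so for n < m, a_pqr(n) is the sum over k = n - i, i < p, of the second
   difference [X^k]E + [X^(k-q-r)]E - [X^(k-q)]E - [X^(k-r)]E.
   Step 2 (lattice digits; only pairwise coprimality is used).  Modulo m each
   k is congruent to exactly one S_k = a_k qr + b_k rp + c_k pq; a_k depends
   only on k mod p (b_k on k mod q, c_k on k mod r); F_k = (S_k - k)/m is an
   integer, [X^k]E = [F_k = 0], and F_k lies in {0, 1, 2} on the window.
   Step 3.  The same window sum of second differences of F vanishes: the b-
   and c-parts cancel by periodicity, and a_(k-i) runs over 0..p-1.
   Step 4.  For values in {0, 1, 2}, N_0 + N_1 + N_2 counts the entries and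
   N_1 + 2 N_2 sums them.  For the window differences Delta_d of N_d this
   gives Delta_0 + Delta_1 + Delta_2 = 0 and, by step 3, Delta_1 + 2 Delta_2
   = 0; step 1 reads a_pqr(n) = Delta_0, and the three formulas follow. *)

Lemma perm_divisors_mul_prime {n l : nat} : prime l -> ~~ (l %| n)%N -> (0 < n)%N ->
  perm_eq (divisors (n * l)) (divisors n ++ [seq (d * l)%N | d <- divisors n]).
Proof.
move=> l_pr l_ndvd n_gt0; have l_gt0 := prime_gt0 l_pr.
have mull_inj : injective (muln^~ l) by move=> x y /eqP; rewrite eqn_pmul2r // => /eqP.
apply: uniq_perm; first exact: divisors_uniq.
  rewrite cat_uniq (map_inj_uniq mull_inj) divisors_uniq andbT /=.
  apply/hasPn => _ /mapP[d _ ->]; rewrite -dvdn_divisors //.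
  by apply: contra l_ndvd; apply: dvdn_trans; apply: dvdn_mull.
move=> d; rewrite mem_cat -!dvdn_divisors ?muln_gt0 ?n_gt0 //.
apply/idP/orP => [d_dvd | [d_dvd | /mapP[e e_dvd ->]]].
- move: d_dvd; have [/dvdnP[e ->] el_dvd | l_ndvd_d d_dvd] := boolP (l %| d)%N.
    by right; apply: map_f; rewrite -dvdn_divisors // -(dvdn_pmul2r l_gt0).
  by left; move: d_dvd; rewrite Gauss_dvdl // coprime_sym prime_coprime.
- exact: dvdn_mulr.
- by rewrite dvdn_pmul2r // dvdn_divisors.
Qed.

Lemma prod_divisors_mul_prime {R : comPzSemiRingType} {f : nat -> R} {n l : nat} :
  prime l -> ~~ (l %| n)%N -> (0 < n)%N ->
  \prod_(d <- divisors (n * l)) f d =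
    (\prod_(d <- divisors n) f d) * \prod_(d <- divisors n) f (d * l)%N.
Proof.
move=> l_pr l_ndvd n_gt0.
by rewrite (perm_big _ (perm_divisors_mul_prime l_pr l_ndvd n_gt0)) big_cat big_map.
Qed.

Lemma prod_divisors_prime {R : comPzSemiRingType} (f : nat -> R) (l : nat) :
  prime l -> \prod_(d <- divisors l) f d = f 1%N * f l.
Proof.
move=> l_pr; rewrite -[l in divisors l]mul1n prod_divisors_mul_prime //; last first.
  by rewrite dvdn1 neq_ltn prime_gt1 ?orbT.
by rewrite !big_seq1 mul1n.
Qed.

(* Both sides factor over the cyclotomic polynomials 'Phi_d, d | pqr. *)
Lemma Phi_pqr_identity (p q r : nat) : prime p -> prime q -> prime r ->
  p != q -> q != r -> p != r ->
  'Phi_(p * q * r) * (('X - 1) * ('X^(p * q) - 1) * ('X^(q * r) - 1) * ('X^(p * r) - 1))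
  = ('X^(p * q * r) - 1) * ('X^p - 1) * ('X^q - 1) * ('X^r - 1) :> {poly int}.
Proof.
move=> p_pr q_pr r_pr p_neq_q q_neq_r p_neq_r.
have Xn_sub1 n : (0 < n)%N -> 'X^n - 1 = \prod_(d <- divisors n) 'Phi_d :> {poly int}.
  by move=> n_gt0; rewrite prod_Cyclotomic.
have prime_ndvd l x : prime l -> prime x -> x != l -> ~~ (l %| x)%N.
  by move=> l_pr x_pr; rewrite dvdn_prime2 // eq_sym.
have q_ndvd_p : ~~ (q %| p)%N by rewrite prime_ndvd.
have r_ndvd_p : ~~ (r %| p)%N by rewrite prime_ndvd.
have r_ndvd_q : ~~ (r %| q)%N by rewrite prime_ndvd.
have r_ndvd_pq : ~~ (r %| p * q)%N by rewrite Euclid_dvdM // negb_or r_ndvd_p.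
rewrite -['X]expr1 !Xn_sub1 // ?muln_gt0 ?prime_gt0 //.
rewrite (prod_divisors_mul_prime (n := p * q) r_pr r_ndvd_pq); last first.
  by rewrite muln_gt0 !prime_gt0.
rewrite !prod_divisors_mul_prime ?prime_gt0 //.
have -> : divisors 1 = [:: 1%N] by [].
rewrite big_seq1 !prod_divisors_prime // !mul1n; ring.
Qed.

(* Coefficients indexed by integers, zero at negative indices, so that
   multiplication by X^s is a plain shift of the index (coefzXnM). *)
Definition coefz (P : {poly int}) (j : int) : int :=
  if j is Posz k then P`_k else 0.

Lemma coefzB (P Q : {poly int}) (j : int) :
  coefz (P - Q) j = coefz P j - coefz Q j.
Proof. by case: j => [k|k] /=; rewrite ?coefB ?subr0. Qed.

Lemma coefz_neg (P : {poly int}) (j : int) : j < 0 -> coefz P j = 0.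
Proof. by case: j. Qed.

Lemma coefzXnM (P : {poly int}) (s : nat) (j : int) :
  coefz ('X^s * P) j = coefz P (j - s%:Z).
Proof.
have [j_lt0 | ] := ltrP j 0; first by rewrite !coefz_neg //; lia.
case: j => // k _ /=; rewrite coefXnM; case: ltnP => [k_lt_s | s_le_k].
  by rewrite coefz_neg // subr_lt0 ltz_nat.
by rewrite subzn.
Qed.

Lemma count012 {s : seq int} : all (fun x => 0 <= x <= 2) s ->
  (count (pred1 0%:Z) s + count (pred1 1%:Z) s + count (pred1 2%:Z) s)%:Z = (size s)%:Z /\
  (count (pred1 1%:Z) s)%:Z + 2 * (count (pred1 2%:Z) s)%:Z = \sum_(x <- s) x.
Proof.
elim: s => [|x s IH] /=; first by rewrite big_nil.
case/andP=> x_range /IH; rewrite big_cons.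
have : x = 0 \/ x = 1 \/ x = 2 by move: x_range; lia.
by case=> [|[|]] ->; rewrite /= => -[size_s sum_s]; split; lia.
Qed.

Lemma digit_eq_dvdz {l x y : nat} : (x < l)%N -> (y < l)%N ->
  (x == y) = (l%:Z %| x%:Z - y%:Z)%Z.
Proof. by move=> x_lt y_lt; rewrite -eqz_mod_dvd !modz_nat eqz_nat !modn_small. Qed.

Lemma digit_eqE {l M x y : nat} {k1 k2 : int} : coprime l M ->
  (x < l)%N -> (y < l)%N ->
  (l%:Z %| k1 - (x * M)%:Z)%Z -> (l%:Z %| k2 - (y * M)%:Z)%Z ->
  (x == y) = (l%:Z %| k1 - k2)%Z.
Proof.
move=> coLM x_lt y_lt dvd1 dvd2.
have -> : (l%:Z %| k1 - k2)%Z = (l%:Z %| (x%:Z - y%:Z) * M%:Z)%Z.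
  have -> : k1 - k2 = (x%:Z - y%:Z) * M%:Z + (k1 - (x * M)%:Z) - (k2 - (y * M)%:Z).
    by rewrite !PoszM; ring.
  by rewrite (rpredBr _ dvd2) (rpredDr _ dvd1).
by rewrite Gauss_dvdzl ?coprimezE // (digit_eq_dvdz x_lt y_lt).
Qed.

Lemma dvdz_drop {l : nat} (m : nat) {X : nat} (Y : nat) {k : int} :
  (l %| m)%N -> (l %| Y)%N -> (m%:Z %| k - (X + Y)%:Z)%Z -> (l%:Z %| k - X%:Z)%Z.
Proof.
move=> l_dvd_m l_dvd_Y /(dvdz_trans (l_dvd_m : (l%:Z %| m%:Z)%Z)) dvd_k.
have -> : k - X%:Z = (k - (X + Y)%:Z) + Y%:Z by rewrite PoszD; ring.
exact: rpredD.
Qed.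

Section Lattice.
Variables p q r : nat.
Hypotheses (p_gt0 : (0 < p)%N) (q_gt0 : (0 < q)%N) (r_gt0 : (0 < r)%N).
Hypotheses (co_pq : coprime p q) (co_qr : coprime q r) (co_pr : coprime p r).
Local Notation m := (p * q * r)%N.

Definition lattice_exp (t : 'I_p * 'I_q * 'I_r) : nat :=
  t.1.1 * (q * r) + t.1.2 * (r * p) + t.2 * (p * q).

Definition Epoly : {poly int} := \sum_(t : 'I_p * 'I_q * 'I_r) 'X^(lattice_exp t).

(* E is a product of three geometric sums, whence the closed form
   E (X^qr - 1)(X^rp - 1)(X^pq - 1) = (X^pqr - 1)^3. *)
Lemma Epoly_geometric :
  Epoly * ('X^(q * r)%N - 1) * ('X^(r * p)%N - 1) * ('X^(p * q)%N - 1) = ('X^m - 1) ^+ 3.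
Proof.
pose geo (k n : nat) : {poly int} := \sum_(i < n) ('X^k) ^+ i.
have geoE k n : geo k n * ('X^k - 1) = 'X^(k * n)%N - 1 by rewrite mulrC -subrX1 exprM.
have -> : Epoly = geo (q * r) p * geo (r * p) q * geo (p * q) r.
  rewrite /geo -mulrA [X in _ * X]big_distrlr big_distrlr /=.
  under eq_bigr do under eq_bigr do rewrite mulr_sumr.
  rewrite pair_big /= pair_big /=; apply: eq_bigr => [[[a b] c]] _ /=.
  rewrite /lattice_exp -!exprM -!exprD /= addnA.
  by rewrite (mulnC (q * r)) (mulnC (r * p)) (mulnC (p * q)).
transitivity ((geo (q * r)%N p * ('X^(q * r)%N - 1)) * (geo (r * p)%N q * ('X^(r * p)%N - 1))
              * (geo (p * q)%N r * ('X^(p * q)%N - 1))); first by ring.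
rewrite !geoE.
have -> : (q * r * p = m)%N by lia.
have -> : (r * p * q = m)%N by lia.
by ring.
Qed.

Let m_gt0 : (0 < m)%N. Proof. by rewrite !muln_gt0 p_gt0 q_gt0. Qed.
Let co_p_qr : coprime p (q * r). Proof. by rewrite coprimeMr co_pq co_pr. Qed.
Let co_q_rp : coprime q (r * p). Proof. by rewrite coprimeMr co_qr coprime_sym co_pq. Qed.
Let co_r_pq : coprime r (p * q). Proof. by rewrite coprimeMr !(coprime_sym r) co_pr co_qr. Qed.

Lemma lattice_digits {k : int} {t : 'I_p * 'I_q * 'I_r} :
  (m%:Z %| k - (lattice_exp t)%:Z)%Z ->
  [/\ (p%:Z %| k - (t.1.1 * (q * r))%:Z)%Z,
      (q%:Z %| k - (t.1.2 * (r * p))%:Z)%Z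
    & (r%:Z %| k - (t.2 * (p * q))%:Z)%Z].
Proof.
move: t => [[a b] c] /= dvd_k; split.
- apply: (dvdz_drop m (b * (r * p) + c * (p * q))%N); last by rewrite addnA.
    by rewrite -mulnA dvdn_mulr.
  by apply: dvdn_add; apply: dvdn_mull; [apply: dvdn_mull | apply: dvdn_mulr].
- apply: (dvdz_drop m (a * (q * r) + c * (p * q))%N).
  + by rewrite mulnAC dvdn_mull // dvdn_mulr.
  + by apply: dvdn_add; apply: dvdn_mull; [apply: dvdn_mulr | apply: dvdn_mull].
  + by rewrite addnCA addnA.
- apply: (dvdz_drop m (a * (q * r) + b * (r * p))%N); last by rewrite addnC.
    exact: dvdn_mull.
  by apply: dvdn_add; apply: dvdn_mull; [apply: dvdn_mull | apply: dvdn_mulr].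
Qed.

Lemma lattice_exp_inj (t t' : 'I_p * 'I_q * 'I_r) :
  (m%:Z %| (lattice_exp t)%:Z - (lattice_exp t')%:Z)%Z -> t = t'.
Proof.
case: t t' => [[a b] c] [[a' b'] c'] dvd_tt'.
have dvd_refl : (m%:Z %| (lattice_exp (a, b, c))%:Z - (lattice_exp (a, b, c))%:Z)%Z.
  by rewrite subrr dvdz0.
have [a_res b_res c_res] := lattice_digits dvd_refl.
have [a'_res b'_res c'_res] := lattice_digits dvd_tt'.
have /eqP/val_inj -> : a == a' :> nat.
  by rewrite (digit_eqE co_p_qr _ _ a_res a'_res) // subrr dvdz0.
have /eqP/val_inj -> : b == b' :> nat.
  by rewrite (digit_eqE co_q_rp _ _ b_res b'_res) // subrr dvdz0.
have /eqP/val_inj -> : c == c' :> nat.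
  by rewrite (digit_eqE co_r_pq _ _ c_res c'_res) // subrr dvdz0.
by [].
Qed.

(* Every integer k is congruent modulo pqr to exactly one lattice exponent,
   and abc returns its digits: t -> lattice_exp t mod pqr is an injection of
   a set of size pqr into 'I_pqr, hence onto. *)
Lemma abc_spec (k : int) : exists t : 'I_p * 'I_q * 'I_r,
  abc p q r k = (t.1.1 : nat, t.1.2 : nat, t.2 : nat) /\
  (m%:Z %| k - (lattice_exp t)%:Z)%Z.
Proof.
rewrite /abc; case: pickP => [t t_res | no_t]; first by exists t; rewrite -eqz_mod_dvd.
exfalso; pose res t : 'I_m := Ordinal (ltn_pmod (lattice_exp t) m_gt0).
have res_inj : injective res.
  move=> t t' /(congr1 val) /= eq_mod; apply: lattice_exp_inj.
  by rewrite -eqz_mod_dvd !modz_nat eq_mod.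
have k_mod_ge0 : 0 <= (k %% m%:Z)%Z by rewrite modz_ge0 // eqz_nat -lt0n.
have k_mod_lt : (`|(k %% m%:Z)%Z| < m)%N.
  by rewrite -ltz_nat gez0_abs // ltz_pmod // ltz_nat.
have /codomP[t /(congr1 val) /= t_mod] : Ordinal k_mod_lt \in codom res.
  by apply: inj_card_onto res_inj _ _; rewrite !card_prod !card_ord.
move/negbT/negP: (no_t t); apply.
by rewrite /= -[(k %% _)%Z]gez0_abs // t_mod -modz_nat.
Qed.

Definition digit_a (k : int) : nat := (abc p q r k).1.1.
Definition digit_b (k : int) : nat := (abc p q r k).1.2.
Definition digit_c (k : int) : nat := (abc p q r k).2.

Definition lattice_rep (k : int) : nat :=
  digit_a k * (q * r) + digit_b k * (r * p) + digit_c k * (p * q).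

Lemma lattice_repP (k : int) : exists2 t : 'I_p * 'I_q * 'I_r,
  lattice_rep k = lattice_exp t & (m%:Z %| k - (lattice_exp t)%:Z)%Z.
Proof.
have [t [abc_k res_k]] := abc_spec k.
by exists t; rewrite // /lattice_rep /digit_a /digit_b /digit_c abc_k.
Qed.

Lemma digit_a_lt (k : int) : (digit_a k < p)%N.
Proof. by have [t [abc_k _]] := abc_spec k; rewrite /digit_a abc_k /=. Qed.

Lemma digit_b_lt (k : int) : (digit_b k < q)%N.
Proof. by have [t [abc_k _]] := abc_spec k; rewrite /digit_b abc_k /=. Qed.

Lemma digit_c_lt (k : int) : (digit_c k < r)%N.
Proof. by have [t [abc_k _]] := abc_spec k; rewrite /digit_c abc_k /=. Qed.

Lemma digit_a_eqE (k1 k2 : int) :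
  (digit_a k1 == digit_a k2) = (p%:Z %| k1 - k2)%Z.
Proof.
have [t [abc1 /lattice_digits[res1 _ _]]] := abc_spec k1.
have [t' [abc2 /lattice_digits[res2 _ _]]] := abc_spec k2.
by rewrite /digit_a abc1 abc2 /= (digit_eqE co_p_qr _ _ res1 res2).
Qed.

Lemma digit_b_eqE (k1 k2 : int) :
  (digit_b k1 == digit_b k2) = (q%:Z %| k1 - k2)%Z.
Proof.
have [t [abc1 /lattice_digits[_ res1 _]]] := abc_spec k1.
have [t' [abc2 /lattice_digits[_ res2 _]]] := abc_spec k2.
by rewrite /digit_b abc1 abc2 /= (digit_eqE co_q_rp _ _ res1 res2).
Qed.

Lemma digit_c_eqE (k1 k2 : int) :
  (digit_c k1 == digit_c k2) = (r%:Z %| k1 - k2)%Z.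
Proof.
have [t [abc1 /lattice_digits[_ _ res1]]] := abc_spec k1.
have [t' [abc2 /lattice_digits[_ _ res2]]] := abc_spec k2.
by rewrite /digit_c abc1 abc2 /= (digit_eqE co_r_pq _ _ res1 res2).
Qed.

Definition Fz (k : int) : int := (((lattice_rep k)%:Z - k) %/ m%:Z)%Z.

Lemma Fz_mul (k : int) : Fz k * m%:Z = (lattice_rep k)%:Z - k.
Proof.
rewrite /Fz; have [t -> res_k] := lattice_repP k.
by rewrite divzK // -opprB rpredN.
Qed.

Lemma Fk_Fz (k : int) : Fk p q r k = (Fz k)%:~R.
Proof.
have m_neq0 : (m%:R : rat) != 0 by rewrite pnatr_eq0 -lt0n m_gt0.
rewrite -[RHS](mulfK m_neq0) -[m%:R]/(m%:Z%:~R) -intrM Fz_mul /lattice_rep.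
rewrite /Fk /digit_a /digit_b /digit_c; case: (abc p q r k) => [[a b] c] /=.
rewrite intrB -!pmulrn !natrD !natrM; field.
by rewrite !pnatr_eq0 -!lt0n p_gt0 q_gt0 r_gt0.
Qed.

Lemma Fz_eq0 (k : int) : (Fz k == 0) = ((lattice_rep k)%:Z == k).
Proof.
have m_neq0 : m%:Z != 0 by rewrite eqz_nat -lt0n m_gt0.
by rewrite -(mulIr_eq0 _ (mulIf m_neq0)) Fz_mul subr_eq0.
Qed.

Lemma lattice_rep_bound (k : int) :
  (lattice_rep k + (q * r + r * p + p * q) <= 3 * m)%N.
Proof.
have := digit_a_lt k; have := digit_b_lt k; have := digit_c_lt k.
rewrite /lattice_rep; nia.
Qed.

Lemma Fz_range (k : int) : - (p + q + r)%:Z < k < m%:Z -> 0 <= Fz k <= 2.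
Proof.
move=> /andP[k_gt k_lt]; have := Fz_mul k; have := lattice_rep_bound k.
have : (p + q + r <= q * r + r * p + p * q)%N by nia.
have := m_gt0; nia.
Qed.

Lemma coefz_Epoly (j : int) : coefz Epoly j = (Fz j == 0 : nat)%:Z.
Proof.
rewrite Fz_eq0; have [t -> res_t] := lattice_repP j.
case: j res_t => [n|n] res_t //=.
rewrite /Epoly coef_sum (bigD1 t) //= coefXn big1 => [|t' t'_neq_t].
  by rewrite addr0 eqz_nat eq_sym; case: eqP.
rewrite coefXn; case: eqP => // n_eq; case/eqP: t'_neq_t.
by apply: lattice_exp_inj; rewrite -n_eq.
Qed.

Lemma digit_b_shift (j : int) : digit_b (j - q%:Z) = digit_b j.
Proof. by apply/eqP; rewrite digit_b_eqE addrAC subrr add0r rpredN dvdzz. Qed.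

Lemma digit_c_shift (j : int) : digit_c (j - r%:Z) = digit_c j.
Proof. by apply/eqP; rewrite digit_c_eqE addrAC subrr add0r rpredN dvdzz. Qed.

Lemma sum_digit_a (u : int) :
  \sum_(i < p) (digit_a (u - i%:Z))%:Z = \sum_(i < p) (i : nat)%:Z.
Proof.
pose f (i : 'I_p) : 'I_p := Ordinal (digit_a_lt (u - i%:Z)).
have f_inj : injective f.
  move=> i i' /(congr1 val) /eqP; rewrite /= digit_a_eqE.
  have -> : u - i%:Z - (u - i'%:Z) = i'%:Z - i%:Z by ring.
  by move=> dvd_ii'; apply/val_inj/eqP; rewrite (digit_eq_dvdz (ltn_ord i) (ltn_ord i')) rpredBC.
by rewrite [RHS](reindex_inj f_inj).
Qed.

Definition sdiff (f : int -> int) (j : int) : int :=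
  f j + f (j - q%:Z - r%:Z) - f (j - q%:Z) - f (j - r%:Z).

(* Since b_k is q-periodic and c_k is r-periodic, only the a-part of
   F = (a qr + b rp + c pq - k)/pqr survives the second difference. *)
Lemma sdiff_Fz (j : int) :
  sdiff Fz j * m%:Z = sdiff (fun k => (digit_a k)%:Z) j * (q * r)%N%:Z.
Proof.
rewrite /sdiff !mulrBl !mulrDl !Fz_mul /lattice_rep !digit_c_shift.
rewrite (addrAC j) !digit_b_shift !PoszD !PoszM; ring.
Qed.

(* Over the window the four sums of a-values are all 0 + 1 + ... + (p-1). *)
Lemma sum_sdiff_digit_a (n : int) :
  \sum_(i < p) sdiff (fun k => (digit_a k)%:Z) (n - i%:Z) = 0.
Proof.
have shifted s : \sum_(i < p) (digit_a (n - i%:Z - s))%:Z = \sum_(i < p) (i : nat)%:Z.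
  by rewrite -(sum_digit_a (n - s)); apply: eq_bigr => i _; rewrite addrAC.
rewrite /sdiff !sumrB big_split /= sum_digit_a.
under [X in _ + X - _ - _]eq_bigr do rewrite -addrA -opprD.
by rewrite !shifted; ring.
Qed.

Lemma sum_sdiff_Fz (n : int) : \sum_(i < p) sdiff Fz (n - i%:Z) = 0.
Proof.
have m_neq0 : m%:Z != 0 by rewrite eqz_nat -lt0n m_gt0.
apply: (mulIf m_neq0); rewrite mul0r mulr_suml.
under eq_bigr do rewrite sdiff_Fz.
by rewrite -mulr_suml sum_sdiff_digit_a mul0r.
Qed.

Lemma Ncount_Fk (d : nat) (k1 k2 : int) :
  Ncount d [:: Fk p q r k1; Fk p q r k2] = count (pred1 d%:Z) [:: Fz k1; Fz k2].
Proof.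
by rewrite /Ncount /= !Fk_Fz -[d%:R]/(d%:Z%:~R) !eqr_int.
Qed.

Section Window.
Hypotheses (p_pr : prime p) (q_pr : prime q) (r_pr : prime r).
Hypotheses (p_neq_q : p != q) (q_neq_r : q != r) (p_neq_r : p != r).

(* Step 1: (1 + X + ... + X^(p-1)) (X^q - 1) (X^r - 1) E = Phi_pqr (X^pqr - 1)^2;
   multiply both sides by (X - 1)(X^pq - 1)(X^qr - 1)(X^pr - 1) and use
   Epoly_geometric and Phi_pqr_identity. *)
Lemma Phi_Epoly :
  (\sum_(i < p) 'X^i) * ('X^q - 1) * ('X^r - 1) * Epoly = 'Phi_m * ('X^m - 1) ^+ 2.
Proof.
pose B : {poly int} := ('X - 1) * ('X^(p * q) - 1) * ('X^(q * r) - 1) * ('X^(p * r) - 1).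
have B_neq0 : B != 0.
  apply: monic_neq0; rewrite /B -['X]expr1.
  by rewrite !monicMl ?monicXnsubC ?muln_gt0 ?p_gt0 ?q_gt0.
apply: (mulIf B_neq0); rewrite [RHS]mulrAC /B Phi_pqr_identity //.
have geo_p : (\sum_(i < p) 'X^i) * ('X - 1) = 'X^p - 1 :> {poly int}.
  by rewrite mulrC -subrX1.
transitivity ((\sum_(i < p) 'X^i) * ('X - 1) * ('X^q - 1) * ('X^r - 1) *
  (Epoly * ('X^(q * r)%N - 1) * ('X^(r * p)%N - 1) * ('X^(p * q)%N - 1))).
  by rewrite /B (mulnC p r); ring.
by rewrite geo_p Epoly_geometric; ring.
Qed.

Variable n : nat.
Hypothesis n_lt_m : (n < m)%N.

Lemma acoef_sdiff :
  acoef m n = \sum_(i < p) sdiff (coefz Epoly) (n%:Z - i%:Z).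
Proof.
have -> : acoef m n = ('Phi_m * ('X^m - 1) ^+ 2)`_n.
  by rewrite expr2 mulrA !mulrBr !mulr1 !coefB !coefMXn n_lt_m !sub0r opprK.
rewrite -Phi_Epoly -!mulrA mulr_suml coef_sum; apply: eq_bigr => i _.
rewrite -[_`_n]/(coefz _ n%:Z) coefzXnM.
have -> : ('X^q - 1) * (('X^r - 1) * Epoly) =
          'X^q * ('X^r * Epoly) - 'X^r * Epoly - ('X^q * Epoly - Epoly) by ring.
by rewrite !coefzB !coefzXnM /sdiff; ring.
Qed.

Lemma Fz_window (j : int) :
  n%:Z - p%:Z - q%:Z - r%:Z < j <= n%:Z -> 0 <= Fz j <= 2.
Proof. by move=> j_range; apply: Fz_range; move: n_lt_m; lia. Qed.

Lemma window_plus (i : 'I_p) : all (fun x => 0 <= x <= 2)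
  [:: Fz (n%:Z - i%:Z); Fz (n%:Z - i%:Z - q%:Z - r%:Z)].
Proof. by rewrite /= !Fz_window //; have := ltn_ord i; lia. Qed.

Lemma window_minus (i : 'I_p) : all (fun x => 0 <= x <= 2)
  [:: Fz (n%:Z - i%:Z - q%:Z); Fz (n%:Z - i%:Z - r%:Z)].
Proof. by rewrite /= !Fz_window //; have := ltn_ord i; lia. Qed.

Definition Ncount_step (d i : nat) : int :=
  (Ncount d [:: Fk p q r (n%:Z - i%:Z); Fk p q r (n%:Z - i%:Z - q%:Z - r%:Z)])%:Z
  - (Ncount d [:: Fk p q r (n%:Z - i%:Z - q%:Z); Fk p q r (n%:Z - i%:Z - r%:Z)])%:Z.

Definition Ncount_diff (d : nat) : int := \sum_(i < p) Ncount_step d i.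

(* The coefficient of X^j in E is N_0(F_j), so step 1 reads a_pqr(n) = Delta_0. *)
Lemma acoef_Ncount_diff0 : acoef m n = Ncount_diff 0.
Proof.
rewrite acoef_sdiff; apply: eq_bigr => i _.
by rewrite /Ncount_step !Ncount_Fk /sdiff !coefz_Epoly /=; lia.
Qed.

(* Each pair has two entries: the steps for d = 0, 1, 2 add up to 0. *)
Lemma Ncount_step_total (i : 'I_p) :
  Ncount_step 0 i + Ncount_step 1 i + Ncount_step 2 i = 0.
Proof.
have [size_plus _] := count012 (window_plus i).
have [size_minus _] := count012 (window_minus i).
rewrite [size _]/= in size_plus; rewrite [size _]/= in size_minus.
by rewrite /Ncount_step !Ncount_Fk; lia.
Qed.

(* Weighting by the values: N_1 + 2 N_2 is the sum of the entries. *)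
Lemma Ncount_step_weighted (i : 'I_p) :
  Ncount_step 1 i + 2 * Ncount_step 2 i = sdiff Fz (n%:Z - i%:Z).
Proof.
have [_ sum_plus] := count012 (window_plus i).
have [_ sum_minus] := count012 (window_minus i).
rewrite !big_cons big_nil in sum_plus sum_minus.
by rewrite /Ncount_step !Ncount_Fk /sdiff; lia.
Qed.

Lemma Ncount_diff_total : Ncount_diff 0 + Ncount_diff 1 + Ncount_diff 2 = 0.
Proof. by rewrite /Ncount_diff -!big_split big1 // => i _; apply: Ncount_step_total. Qed.

Lemma Ncount_diff_weighted : Ncount_diff 1 + 2 * Ncount_diff 2 = 0.
Proof.
rewrite /Ncount_diff mulr_sumr -big_split -[RHS](sum_sdiff_Fz n).
by apply: eq_bigr => i _; apply: Ncount_step_weighted.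
Qed.

Lemma acoef_Ncount_diff2 : acoef m n = Ncount_diff 2.
Proof.
by have := Ncount_diff_total; have := Ncount_diff_weighted; rewrite acoef_Ncount_diff0; lia.
Qed.

Lemma acoef_Ncount_diff1 :
  (acoef m n)%:~R = (1 / 2 : rat) * \sum_(i < p)
    ((Ncount 1 [:: Fk p q r (n%:Z - i%:Z - q%:Z); Fk p q r (n%:Z - i%:Z - r%:Z)])%:R
     - (Ncount 1 [:: Fk p q r (n%:Z - i%:Z); Fk p q r (n%:Z - i%:Z - q%:Z - r%:Z)])%:R).
Proof.
have twice : - Ncount_diff 1 = acoef m n * 2.
  by have := Ncount_diff_total; have := Ncount_diff_weighted; rewrite acoef_Ncount_diff0; lia.
transitivity ((1 / 2 : rat) * (- Ncount_diff 1)%:~R); first by rewrite twice intrM; field.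
congr (_ * _); rewrite /Ncount_diff rmorphN rmorph_sum -sumrN.
by apply: eq_bigr => i _; rewrite /Ncount_step rmorphB opprB.
Qed.
End Window.
End Lattice.

Lemma coprime_primes {l l' : nat} : prime l -> prime l' -> l != l' -> coprime l l'.
Proof. by move=> l_pr l'_pr; rewrite prime_coprime // dvdn_prime2. Qed.

Theorem lemma5 (p q r n : nat) :
  prime p -> prime q -> prime r -> p != q -> q != r -> p != r ->
  (p < q)%N -> (p < r)%N -> (n < p * q * r)%N ->
  let F := Fk p q r in
  let k := fun i : nat => n%:Z - i%:Z in
  [/\ acoef (p * q * r) n =
        \sum_(i < p)
          ((Ncount 0 [:: F (k i); F (k i - q%:Z - r%:Z)])%:Z
           - (Ncount 0 [:: F (k i - q%:Z); F (k i - r%:Z)])%:Z),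
      acoef (p * q * r) n =
        \sum_(i < p)
          ((Ncount 2 [:: F (k i); F (k i - q%:Z - r%:Z)])%:Z
           - (Ncount 2 [:: F (k i - q%:Z); F (k i - r%:Z)])%:Z)
    & (acoef (p * q * r) n)%:~R =
        (1 / 2 : rat) * \sum_(i < p)
          ((Ncount 1 [:: F (k i - q%:Z); F (k i - r%:Z)])%:R
           - (Ncount 1 [:: F (k i); F (k i - q%:Z - r%:Z)])%:R)].
Proof.
move=> p_pr q_pr r_pr p_neq_q q_neq_r p_neq_r _ _ n_lt F k.
have [p_gt0 q_gt0 r_gt0] := And3 (prime_gt0 p_pr) (prime_gt0 q_pr) (prime_gt0 r_pr).
have co_pq := coprime_primes p_pr q_pr p_neq_q.
have co_qr := coprime_primes q_pr r_pr q_neq_r.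
have co_pr := coprime_primes p_pr r_pr p_neq_r.
by split; [apply: acoef_Ncount_diff0 | apply: acoef_Ncount_diff2 | apply: acoef_Ncount_diff1].
Qed.
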